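(* For every integer $n\ge 1$ there is a context-free grammar of size $O(\log n)$ whose language is exactly \[ L_n=\{(a+b)^k\,a\,(a+b)^{n-1}\,a\,(a+b)^{n-1-k} \mid 0\le k\le n-1\}\subseteq\{a,b\}^{2n}. \]
   Context: A context-free grammar is $G=(\Sigma,N,R,S)$ with terminals $\Sigma$, non-terminals $N$, rules $A\to W$ ($A\in N$, $W\in(\Sigma\cup N)^*$) and start symbol $S$. Its size is $|G|=\sum_{(A\to W)\in R}|W|$. *)

From mathcomp Require Import all_boot.
From Stdlib Require List.
From Stdlib Require Import Relation_Operators.
Set Implicit Arguments. Unset Strict Implicit. Unset Printing Implicit Defensive.

Inductive sigma := a | b.

Definition symbol (N : Type) := (sigma + N)%type.

Record cfg := CFG {
  nonterm : Type;
  rules : seq (nonterm * seq (symbol nonterm))%type;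
  start : nonterm }.

Definition cfg_size (G : cfg) : nat := sumn (map (fun r => size r.2) (rules G)).

Definition step (G : cfg) (u v : seq (symbol (nonterm G))) : Prop :=
  exists (p s : seq (symbol (nonterm G))) (A : nonterm G) (W : seq (symbol (nonterm G))),
    List.In (A, W) (rules G) /\ u = p ++ inr A :: s /\ v = p ++ W ++ s.

Definition lang (G : cfg) (w : seq sigma) : Prop :=
  clos_refl_trans _ (@step G) [:: inr (start G)] (map inl w).

Definition Ln (n : nat) (w : seq sigma) : Prop :=
  exists k, k <= n - 1 /\
    exists u v x : seq sigma,
      size u = k /\ size v = n - 1 /\ size x = n - 1 - k /\
      w = u ++ a :: v ++ a :: x.

From mathcomp Require Import all_boot zify.
From Stdlib Require List.
From Stdlib Require Import Relation_Operators.
Set Implicit Arguments. Unset Strict Implicit. Unset Printing Implicit Defensive.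

(* Every word of L_n is u (a v a) x with |v| = n-1 and |u| + |x| = n-1.  A
   non-terminal [Len l] for the words of length l splits into [Len (l/2)] and
   [Len (l - l/2)], and a non-terminal [Pad m] for the words u (a v a) x with
   |u| + |x| = m splits into [Pad (m/2)] and [Len (m - m/2)] in either order.
   Starting from m = n-1 only the values m = (n-1)/2^i and their successors
   occur, so O(log n) non-terminals with rules of bounded size suffice. *)

Lemma In_cat T (x : T) s1 s2 : List.In x (s1 ++ s2) <-> List.In x s1 \/ List.In x s2.
Proof. split; [exact: List.in_app_or | exact: List.in_or_app]. Qed.

Lemma In_flatten_map (T : eqType) U (f : T -> seq U) s x y :
  x \in s -> List.In y (f x) -> List.In y (flatten (map f s)).
Proof.
elim: s => //= z s IH; rewrite in_cons In_cat => /orP[/eqP <-|/IH]; tauto.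
Qed.

Lemma In_flatten_mapP T U (f : T -> seq U) s y :
  List.In y (flatten (map f s)) -> exists x, List.In y (f x).
Proof. elim: s => //= z s IH; rewrite In_cat => -[|/IH//]; by exists z. Qed.

Fixpoint sem_form (N : Type) (spec : N -> seq sigma -> Prop)
    (s : seq (symbol N)) (w : seq sigma) : Prop :=
  match s with
  | [::] => w = [::]
  | inl c :: s' => exists2 w', w = c :: w' & sem_form spec s' w'
  | inr A :: s' => exists w1 w2, [/\ w = w1 ++ w2, spec A w1 & sem_form spec s' w2]
  end.

Lemma sem_form1 N (spec : N -> seq sigma -> Prop) A w :
  sem_form spec [:: inr A] w <-> spec A w.
Proof.
split=> [[w1 [w2 [-> H1 /= ->]]]|H]; first by rewrite cats0.
by exists w, [::]; rewrite cats0.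
Qed.

Lemma sem_form2 N (spec : N -> seq sigma -> Prop) A B w :
  sem_form spec [:: inr A; inr B] w <->
  exists w1 w2, [/\ w = w1 ++ w2, spec A w1 & spec B w2].
Proof.
split=> [[w1 [w2 [-> H1 /sem_form1 H2]]]|[w1 [w2 [-> H1 H2]]]]; first by exists w1, w2.
by exists w1, w2; split=> //; apply/sem_form1.
Qed.

Section ParseForests.

Variable G : cfg.
Notation form := (seq (symbol (nonterm G))).

Inductive yields : form -> seq sigma -> Prop :=
| yields_nil : yields [::] [::]
| yields_term c s w : yields s w -> yields (inl c :: s) (c :: w)
| yields_nonterm A W s w1 w2 : List.In (A, W) (rules G) ->
    yields W w1 -> yields s w2 -> yields (inr A :: s) (w1 ++ w2).

Definition generates (A : nonterm G) (w : seq sigma) := yields [:: inr A] w.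

Lemma yields_cat s1 s2 w1 w2 :
  yields s1 w1 -> yields s2 w2 -> yields (s1 ++ s2) (w1 ++ w2).
Proof.
move=> y1 y2; elim: y1 => //= [c s w _ IH|A W s u1 u2 AW yW _ _ IH].
  exact: yields_term.
by rewrite -catA; apply: yields_nonterm AW yW IH.
Qed.

Lemma yields_catV s1 s2 w : yields (s1 ++ s2) w ->
  exists w1 w2, [/\ w = w1 ++ w2, yields s1 w1 & yields s2 w2].
Proof.
elim: s1 w => [|x s1 IH] w /=; first by exists [::], w; split=> //; apply: yields_nil.
case E: _ _ / => [|c s w' ys|A W s w1 w2 AW yW ys] //; case: E => -> E; subst s.
- have [u1 [u2 [-> y1 y2]]] := IH _ ys; exists (c :: u1), u2.
  by split=> //; apply: yields_term.
- have [u1 [u2 [-> y1 y2]]] := IH _ ys; exists (w1 ++ u1), u2.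
  by split; [rewrite catA | apply: yields_nonterm AW yW y1 |].
Qed.

Lemma yields_word w : yields (map inl w) w.
Proof. by elim: w => [|c w IH]; [apply: yields_nil | apply: yields_term]. Qed.

Lemma derives_context p q u v : clos_refl_trans _ (@step G) u v ->
  clos_refl_trans _ (@step G) (p ++ u ++ q) (p ++ v ++ q).
Proof.
elim=> [x y [p' [s [A [W [AW [-> ->]]]]]]|x|x y z _ IHxy _ IHyz].
- by apply: rt_step; exists (p ++ p'), (s ++ q), A, W; rewrite -!catA.
- exact: rt_refl.
- exact: rt_trans IHxy IHyz.
Qed.

Lemma yields_derives s w : yields s w -> clos_refl_trans _ (@step G) s (map inl w).
Proof.
elim=> [|c s' w' _ IH|A W s' w1 w2 AW _ IH1 _ IH2]; first exact: rt_refl.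
  by have := derives_context [:: inl c] [::] IH; rewrite !cats0.
apply: (@rt_trans _ _ _ (W ++ s')); first by apply: rt_step; exists [::], s', A, W.
apply: (@rt_trans _ _ _ (map inl w1 ++ s')); first by have := derives_context [::] s' IH1.
by have := derives_context (map inl w1) [::] IH2; rewrite !cats0 map_cat.
Qed.

Lemma derives_yields u v w :
  clos_refl_trans _ (@step G) u v -> yields v w -> yields u w.
Proof.
move=> uv; elim: uv w => // [x y [p [s [A [W [AW [-> ->]]]]]]|x y z _ IHxy _ IHyz] w;
  last by move/IHyz/IHxy.
case/yields_catV=> wp [r [-> yp /yields_catV [wW [ws [-> yW ys]]]]].
by apply: yields_cat yp _; apply: yields_nonterm AW yW ys.
Qed.

Lemma langE w : lang G w <-> generates (start G) w.
Proof.
split=> [|/yields_derives//]; move/derives_yields; apply; exact: yields_word.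
Qed.

Definition rules_closed (spec : nonterm G -> seq sigma -> Prop) :=
  forall A W w, List.In (A, W) (rules G) -> sem_form spec W w -> spec A w.

Lemma yields_sem_form spec s w : rules_closed spec -> yields s w -> sem_form spec s w.
Proof.
move=> closed; elim=> [|c s' w' _ IH|A W s' w1 w2 AW _ IH1 _ IH2] //=.
  by exists w'.
by exists w1, w2; split=> //; apply: closed AW IH1.
Qed.

Lemma generates_sound spec A w : rules_closed spec -> generates A w -> spec A w.
Proof. by move=> closed /(yields_sem_form closed) /sem_form1. Qed.

Lemma sem_form_yields s w : sem_form generates s w -> yields s w.
Proof.
elim: s w => [|[c|A] s IH] w /=; first by move->; apply: yields_nil.
  by case=> w' -> /IH; apply: yields_term.
by case=> w1 [w2 [-> y1 /IH y2]]; have := yields_cat y1 y2.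
Qed.

Lemma generates_rule A W w :
  List.In (A, W) (rules G) -> sem_form generates W w -> generates A w.
Proof.
move=> AW /sem_form_yields yW; rewrite /generates -[w]cats0.
by apply: yields_nonterm AW yW yields_nil.
Qed.

End ParseForests.

Arguments rules_closed : clear implicits.
Arguments generates : clear implicits.
Arguments generates_rule G [A W w].

Inductive nt := Len of nat | Pad of nat | Core.

Definition len_rules (l : nat) : seq (nt * seq (symbol nt)) :=
  match l with
  | 0 => [:: (Len 0, [::])]
  | 1 => [:: (Len 1, [:: inl a]); (Len 1, [:: inl b])]
  | _ => [:: (Len l, [:: inr (Len (l %/ 2)); inr (Len (l - l %/ 2))])]
  end.

Definition pad_rules (m : nat) : seq (nt * seq (symbol nt)) :=
  if m is 0 then [:: (Pad 0, [:: inr Core])] else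
  [:: (Pad m, [:: inr (Pad (m %/ 2)); inr (Len (m - m %/ 2))]);
      (Pad m, [:: inr (Len (m - m %/ 2)); inr (Pad (m %/ 2))])].

(* The list ends with 0, hence is closed under halving. *)
Definition halvings (n : nat) : seq nat :=
  [seq n.-1 %/ 2 ^ i | i <- iota 0 (trunc_log 2 n).+2].

Definition level_rules (m : nat) := len_rules m ++ len_rules m.+1 ++ pad_rules m.

Definition grammar (n : nat) : cfg :=
  {| nonterm := nt;
     rules := (Core, [:: inl a; inr (Len n.-1); inl a]) ::
              flatten (map level_rules (halvings n));
     start := Pad n.-1 |}.

Definition rules_size (N : Type) (rs : seq (N * seq (symbol N))) :=
  sumn (map (fun r => size r.2) rs).

Lemma rules_size_cat (N : Type) (rs1 rs2 : seq (N * seq (symbol N))) :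
  rules_size (rs1 ++ rs2) = rules_size rs1 + rules_size rs2.
Proof. by rewrite /rules_size map_cat sumn_cat. Qed.

Lemma rules_size_flatten (N T : Type) (f : T -> seq (N * seq (symbol N))) s c :
  (forall x, rules_size (f x) <= c) -> rules_size (flatten (map f s)) <= c * size s.
Proof.
move=> le_c; elim: s => //= x s IH; rewrite rules_size_cat mulnS.
exact: leq_add (le_c x) IH.
Qed.

Lemma size_level_rules m : rules_size (level_rules m) <= 8.
Proof.
have len2 l : rules_size (len_rules l) <= 2 by case: l => [|[|l]].
rewrite !rules_size_cat; have := len2 m; have := len2 m.+1.
by case: m => [|m]; rewrite /rules_size /=; lia.
Qed.

Lemma size_halvings n : size (halvings n) = (trunc_log 2 n).+2.
Proof. by rewrite size_map size_iota. Qed.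

Lemma grammar_size n : cfg_size (grammar n) <= 19 * (trunc_log 2 n).+1.
Proof.
have := rules_size_flatten (halvings n) size_level_rules; rewrite size_halvings.
by rewrite /cfg_size /= -/(rules_size _); lia.
Qed.

Lemma halvings_top n : n.-1 \in halvings n.
Proof. by apply/mapP; exists 0; rewrite ?expn0 ?divn1 // mem_iota. Qed.

Lemma halvings_half n m : m \in halvings n -> m %/ 2 \in halvings n.
Proof.
case/mapP=> i; rewrite mem_iota add0n => lt_i ->.
have n_small : n.-1 < 2 ^ (trunc_log 2 n).+1.
  by apply: leq_ltn_trans (leq_pred n) (trunc_log_ltn _ _).
rewrite -divnMA -expnSr; apply/mapP.
case: (ltnP i.+1 (trunc_log 2 n).+2) => [lt_Si|le_Si].
  by exists i.+1; rewrite // mem_iota.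
exists (trunc_log 2 n).+1; first by rewrite mem_iota; lia.
rewrite !divn_small // (leq_trans n_small) // leq_pexp2l //; lia.
Qed.

Section Language.

Variable n : nat.

Definition marked (y : seq sigma) := exists2 v, size v = n.-1 & y = a :: v ++ [:: a].

Definition padded (m : nat) (w : seq sigma) :=
  exists u y x, [/\ size u + size x = m, marked y & w = u ++ y ++ x].

Definition nt_spec (A : nt) (w : seq sigma) :=
  match A with
  | Len l => size w = l
  | Pad m => padded m w
  | Core => marked w
  end.

Lemma padded_catr m w z : padded m w -> padded (m + size z) (w ++ z).
Proof.
case=> u [y [x [<- my ->]]]; exists u, y, (x ++ z).
by rewrite size_cat addnA -!catA.
Qed.

Lemma padded_catl m w z : padded m w -> padded (size z + m) (z ++ w).
Proof.
case=> u [y [x [<- my ->]]]; exists (z ++ u), y, x.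
by rewrite size_cat addnA catA.
Qed.

Lemma padded0 y : marked y -> padded 0 y.
Proof. by exists [::], y, [::]; rewrite cats0. Qed.

Lemma len_rules_closed l A W w :
  List.In (A, W) (len_rules l) -> sem_form nt_spec W w -> nt_spec A w.
Proof.
case: l => [|[|l]] /=.
- by case=> // -[<- <-] ->.
- by case=> [|[|//]] [<- <-] [_ -> ->].
- case=> // -[<- <-] /sem_form2 [w1 [w2 [-> /= s1 s2]]].
  by rewrite size_cat s1 s2; lia.
Qed.

Lemma pad_rules_closed m A W w :
  List.In (A, W) (pad_rules m) -> sem_form nt_spec W w -> nt_spec A w.
Proof.
case: m => [|m] /=; first by case=> // -[<- <-] /sem_form1; apply: padded0.
case=> [|[|//]] [<- <-] /sem_form2 [w1 [w2 [-> /= p1 p2]]].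
- by have := padded_catr w2 p1; rewrite p2; congr padded; lia.
- by have := padded_catl w1 p2; rewrite p1; congr padded; lia.
Qed.

Lemma nt_spec_closed : rules_closed (grammar n) nt_spec.
Proof.
move=> A W w [[<- <-]|AW]; last have [m] := In_flatten_mapP AW.
  by case=> _ -> [v [_ [-> sv [_ -> ->]]]]; exists v.
rewrite /level_rules !In_cat => -[|[]];
  [exact: len_rules_closed | exact: len_rules_closed | exact: pad_rules_closed].
Qed.

Definition halving_length l := exists2 m, m \in halvings n & l \in [:: m; m.+1].

Lemma level_rules_in m r :
  m \in halvings n -> List.In r (level_rules m) -> List.In r (rules (grammar n)).
Proof. by move=> hm hr; right; apply: In_flatten_map hm hr. Qed.

Lemma len_rules_in l r :
  halving_length l -> List.In r (len_rules l) -> List.In r (rules (grammar n)).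
Proof.
case=> m hm; rewrite !inE => /orP[] /eqP -> hr; apply: level_rules_in hm _;
  by rewrite /level_rules !In_cat; tauto.
Qed.

Lemma halving_length_halves l : halving_length l -> 1 < l ->
  halving_length (l %/ 2) /\ halving_length (l - l %/ 2).
Proof.
case=> m hm; rewrite !inE => lm l_gt1.
have hh : m %/ 2 \in halvings n by apply: halvings_half.
by split; exists (m %/ 2); rewrite // !inE; lia.
Qed.

Lemma generates_len_rule l W w :
  halving_length l -> List.In (Len l, W) (len_rules l) ->
  sem_form (generates (grammar n)) W w -> generates (grammar n) (Len l) w.
Proof. by move=> /len_rules_in hl /hl; apply: (generates_rule (grammar n)). Qed.

Lemma generates_len l : halving_length l ->
  forall w, size w = l -> generates (grammar n) (Len l) w.
Proof.
elim/ltn_ind: l => -[|[|l]] IH hl w sw.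
- rewrite (size0nil sw); apply: (generates_len_rule (W := [::])) => //; by left.
- case: w sw => [|c [|//]] // _; apply: (generates_len_rule (W := [:: inl c])) => //.
    by case: c; [left | right; left].
  by exists [::].
- have [hl1 hl2] := halving_length_halves hl isT.
  rewrite -(cat_take_drop (l.+2 %/ 2) w); apply: generates_len_rule hl _ _; first by left.
  apply/sem_form2; exists (take (l.+2 %/ 2) w), (drop (l.+2 %/ 2) w); split=> //.
    by apply: (IH _ _ hl1); rewrite ?size_takel ?sw; lia.
  by apply: (IH _ _ hl2); rewrite ?size_drop ?sw; lia.
Qed.

Lemma generates_core y : marked y -> generates (grammar n) Core y.
Proof.
case=> v sv ->; apply: (generates_rule (grammar n)); first by left.
exists (v ++ [:: a]) => //; exists v, [:: a]; split=> //; last by exists [::].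
by apply: generates_len sv; exists n.-1; rewrite ?inE ?eqxx //; apply: halvings_top.
Qed.

Lemma pad_rules_in m r :
  m \in halvings n -> List.In r (pad_rules m) -> List.In r (rules (grammar n)).
Proof.
by move=> hm hr; apply: level_rules_in hm _; rewrite /level_rules !In_cat; tauto.
Qed.

Lemma generates_pad m : m \in halvings n ->
  forall w, padded m w -> generates (grammar n) (Pad m) w.
Proof.
elim/ltn_ind: m => -[|m] IH hm w [u [y [x [sux my ->]]]].
  move: sux => /eqP; rewrite addn_eq0 => /andP[/eqP/size0nil -> /eqP/size0nil ->].
  rewrite cats0; apply: (generates_rule (grammar n)).
    by apply: pad_rules_in hm _; left.
  by apply/sem_form1; apply: generates_core.
set h := m.+1 %/ 2; set r := m.+1 - h.
have hh : h \in halvings n by apply: halvings_half.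
have hr : halving_length r by exists h; rewrite // !inE; lia.
have IHh := IH h (ltn_Pdiv (isT : 1 < 2) (ltn0Sn m)) hh.
case: (leqP r (size u)) => [le_ru|lt_ur].
- rewrite -(cat_take_drop r u) -catA.
  apply: (generates_rule (grammar n) (W := [:: inr (Len r); inr (Pad h)])).
    by apply: pad_rules_in hm _; right; left.
  apply/sem_form2; exists (take r u), (drop r u ++ y ++ x); split=> //.
    by apply: (generates_len hr); rewrite size_takel.
  by apply: IHh; exists (drop r u), y, x; rewrite size_drop; split=> //; lia.
- (* u is shorter than r, so x has at least r letters *)
  rewrite -(cat_take_drop (size x - r) x) !catA.
  apply: (generates_rule (grammar n) (W := [:: inr (Pad h); inr (Len r)])).
    by apply: pad_rules_in hm _; left.
  apply/sem_form2; exists ((u ++ y) ++ take (size x - r) x), (drop (size x - r) x).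
  split=> //; last by apply: (generates_len hr); rewrite size_drop; lia.
  apply: IHh; exists u, y, (take (size x - r) x).
  by rewrite -catA size_takel ?leq_subr; split=> //; lia.
Qed.

Lemma Ln_padded w : Ln n w <-> padded n.-1 w.
Proof.
split.
  case=> k [le_k [u [v [x [su [sv [sx ->]]]]]]]; exists u, (a :: v ++ [:: a]), x.
  by split; [lia | exists v => //; lia | rewrite /= -catA].
case=> u [_ [x [sux [v sv ->] ->]]]; exists (size u); split; first lia.
by exists u, v, x; rewrite /= -catA; do !split=> //; lia.
Qed.

Lemma grammar_lang w : lang (grammar n) w <-> Ln n w.
Proof.
rewrite langE Ln_padded; split; first exact: generates_sound nt_spec_closed.
exact: generates_pad (halvings_top n) w.
Qed.

End Language.

Theorem mainTheorem2 :
  exists C : nat, forall n : nat, 1 <= n ->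
    exists G : cfg,
      cfg_size G <= C * (trunc_log 2 n).+1 /\
      (forall w : seq sigma, lang G w <-> Ln n w).
Proof.
(* The construction also works for n = 0, where L_0 = {aa}. *)
exists 19 => n _; exists (grammar n); split; first exact: grammar_size.
exact: grammar_lang.
Qed.
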